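(* Let $q\in\mathrm{prob}(\{0,1\}^2)$. The set $D:=\{(\pi_1,\chi^{(1)}_{1|1}):(\pi,\chi)\in\Theta_2,\ \mu(\pi,\chi)=q\}$ is nonempty and equals the set of all $(\mathrm{Pr},\mathrm{Se}_1)\in[0,1]^2$ satisfying $\mathrm{Pr}-q_{0+}\le\mathrm{Pr}\,\mathrm{Se}_1\le q_{1+}$.
   Context: A subscript $+$ denotes summation over the replaced index: $q_{0+}=q_{00}+q_{01}$, $q_{1+}=q_{10}+q_{11}$. $\mathrm{prob}(\mathcal{X})$ is the set of probability densities on a finite set $\mathcal{X}$; $\mathrm{markov}(\mathcal{X},\mathcal{Y})$ the set of maps $(x,y)\mapsto p_{y|x}$ with $p_{\cdot|x}\in\mathrm{prob}(\mathcal{Y})$. $\Theta_2:=\mathrm{prob}(\{0,1\})\times\mathrm{markov}(\{0,1\},\{0,1\}^2)$, $\mu(\pi,\chi)_j:=\sum_{i=0}^1\pi_i\chi_{j|i}$ for $j\in\{0,1\}^2$, $\chi^{(1)}_{\iota|i}:=\chi_{\iota0|i}+\chi_{\iota1|i}$. *)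

(* finite probability on {0,1} = 'I_2, {0,1}^2 = 'I_2 * 'I_2. *)
From HB Require Import structures.
From mathcomp Require Import all_boot all_order all_algebra.
Set Implicit Arguments. Unset Strict Implicit. Unset Printing Implicit Defensive.
Import Order.TTheory GRing.Theory Num.Theory.
Local Open Scope ring_scope.

Definition prob (R : realFieldType) (X : finType) (p : X -> R) : Prop :=
  (forall x, 0 <= p x) /\ \sum_(x : X) p x = 1.

Definition markov (R : realFieldType) (X Y : finType) (k : X -> Y -> R) : Prop :=
  forall x, prob (k x).

Definition b0 : 'I_2 := ord0.
Definition b1 : 'I_2 := ord_max.

Definition mu (R : realFieldType) (pi : 'I_2 -> R) (chi : 'I_2 -> 'I_2 * 'I_2 -> R)
  (j : 'I_2 * 'I_2) : R := \sum_(i : 'I_2) pi i * chi i j.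

Definition chi1 (R : realFieldType) (chi : 'I_2 -> 'I_2 * 'I_2 -> R) (iota i : 'I_2) : R :=
  chi i (iota, b0) + chi i (iota, b1).

Definition qplus (R : realFieldType) (q : 'I_2 * 'I_2 -> R) (iota : 'I_2) : R :=
  q (iota, b0) + q (iota, b1).

Definition inD (R : realFieldType) (q : 'I_2 * 'I_2 -> R) (Pr Se : R) : Prop :=
  exists (pi : 'I_2 -> R) (chi : 'I_2 -> 'I_2 * 'I_2 -> R),
    prob pi /\ markov chi /\ (forall j, mu pi chi j = q j) /\
    Pr = pi b1 /\ Se = chi1 chi b1 b1.

(** Row marginals are preserved by [mu]:
    [q_{iota+} = pi_0 chi^(1)_{iota|0} + pi_1 chi^(1)_{iota|1}].  Dropping the
    nonnegative [pi_0]-terms bounds [pi_1 Se = pi_1 chi^(1)_{1|1}] by [q_{1+}] and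
    [pi_1 (1 - Se) = pi_1 chi^(1)_{0|1}] by [q_{0+}].  Conversely, for [(Pr, Se)] in the
    region choose [0 <= r <= q] with row masses [Pr (1 - Se)] and [Pr Se]; then
    [pi = (1 - Pr, Pr)], with [chi_{.|0}] and [chi_{.|1}] the normalisations of [q - r]
    and [r], mixes back to [q] and realises [(Pr, Se)]. *)
From mathcomp Require Import all_boot all_order all_algebra ring lra.
Import Order.TTheory GRing.Theory Num.Theory.
Set Implicit Arguments.
Unset Strict Implicit.
Local Open Scope ring_scope.

Lemma big_ord2 (R : nmodType) (f : 'I_2 -> R) : \sum_i f i = f b0 + f b1.
Proof. by rewrite big_ord_recl big_ord1; congr (_ + f _); apply: val_inj. Qed.

Lemma sum_qplus (R : realFieldType) (f : 'I_2 * 'I_2 -> R) :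
  \sum_j f j = qplus f b0 + qplus f b1.
Proof.
rewrite (eq_bigr (fun j => f (j.1, j.2))); last by case.
by rewrite -(pair_bigA _ (fun i k => f (i, k))) /= !big_ord2.
Qed.

Lemma qplus_ge0 (R : realFieldType) (f : 'I_2 * 'I_2 -> R) iota :
  (forall j, 0 <= f j) -> 0 <= qplus f iota.
Proof. by move=> f_ge0; rewrite addr_ge0. Qed.

Lemma qplus_mu (R : realFieldType) pi (chi : 'I_2 -> 'I_2 * 'I_2 -> R) iota :
  qplus (mu pi chi) iota = pi b0 * chi1 chi iota b0 + pi b1 * chi1 chi iota b1.
Proof. by rewrite /qplus /mu /chi1 !big_ord2; ring. Qed.

Lemma inD_bounds (R : realFieldType) (q : 'I_2 * 'I_2 -> R) Pr Se :
  inD q Pr Se ->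
  (0 <= Pr <= 1) && (0 <= Se <= 1) /\
  Pr - qplus q b0 <= Pr * Se /\ Pr * Se <= qplus q b1.
Proof.
move=> [pi [chi [[pi_ge0 pi_sum] [chi_markov [mu_q [-> ->]]]]]].
have q_qplus iota : qplus q iota = qplus (mu pi chi) iota.
  by rewrite /qplus !mu_q.
rewrite !q_qplus !qplus_mu; rewrite big_ord2 in pi_sum.
have chi1_ge0 iota i : 0 <= chi1 chi iota i.
  by apply: qplus_ge0; case: (chi_markov i).
have chi1_sum : chi1 chi b0 b1 + chi1 chi b1 b1 = 1.
  by have [_] := chi_markov b1; rewrite sum_qplus.
have pi0_chi1_ge0 iota : 0 <= pi b0 * chi1 chi iota b0 by rewrite mulr_ge0.
have pi1_chi1_compl : pi b1 * chi1 chi b0 b1 = pi b1 - pi b1 * chi1 chi b1 b1.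
  by rewrite -[X in X - _]mulr1 -chi1_sum; ring.
have p0_ge0 := pi_ge0 b0; have p1_ge0 := pi_ge0 b1.
have Se_ge0 := chi1_ge0 b1 b1; have compl_ge0 := chi1_ge0 b0 b1.
have q0_ge0 := pi0_chi1_ge0 b0; have q1_ge0 := pi0_chi1_ge0 b1.
rewrite pi1_chi1_compl; split; last by split; lra.
by apply/andP; split; apply/andP; split; lra.
Qed.

Section Normalize.
Variables (R : realFieldType) (X : finType) (d m : X -> R).
Hypothesis m_ge0 : forall x, 0 <= m x.

Definition normalize (x : X) : R :=
  if \sum_y m y == 0 then d x else m x / \sum_y m y.

Lemma normalize_prob : prob d -> prob normalize.
Proof.
rewrite /normalize; case: eqP => [_ //|sum_neq0 _].
split; first by move=> x; rewrite divr_ge0 ?sumr_ge0.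
by rewrite -mulr_suml mulfV; last exact/eqP.
Qed.

Lemma mass_normalize x : (\sum_y m y) * normalize x = m x.
Proof.
rewrite /normalize; case: eqP => [sum0|/eqP sum_neq0].
  by rewrite sum0 mul0r (psumr_eq0P (fun y _ => m_ge0 y) sum0).
by rewrite mulrC divfK.
Qed.

End Normalize.

Lemma ord2P (i : 'I_2) : i = b0 \/ i = b1.
Proof. by case: i => [[|[|]]] //= ?; [left | right]; apply: val_inj. Qed.

(* Greedily fills row [iota] of [q], column [0] first, up to the mass [t iota]. *)
Definition fill_rows (R : realFieldType) (q : 'I_2 * 'I_2 -> R) (t : 'I_2 -> R)
    (j : 'I_2 * 'I_2) : R :=
  let m := Num.min (t j.1) (q (j.1, b0)) in if j.2 == b0 then m else t j.1 - m.

Lemma qplus_fill_rows (R : realFieldType) (q : 'I_2 * 'I_2 -> R) t iota :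
  qplus (fill_rows q t) iota = t iota.
Proof. by rewrite /qplus /fill_rows /= addrC subrK. Qed.

Lemma fill_rows_bounds (R : realFieldType) (q : 'I_2 * 'I_2 -> R) t :
  (forall j, 0 <= q j) -> (forall iota, 0 <= t iota <= qplus q iota) ->
  forall j, 0 <= fill_rows q t j <= q j.
Proof.
move=> q_ge0 t_bounds [iota k]; rewrite /fill_rows /=.
have /andP[t_ge0 t_le] := t_bounds iota; move: t_le; rewrite /qplus.
have := q_ge0 (iota, b0); have := q_ge0 (iota, b1).
case: (ord2P k) => -> /=; case: (leP (t iota) (q (iota, b0))) => *.
all: by apply/andP; split; lra.
Qed.

Lemma inD_of_bounds (R : realFieldType) (q : 'I_2 * 'I_2 -> R) Pr Se :
  prob q ->
  (0 <= Pr <= 1) && (0 <= Se <= 1) /\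
  Pr - qplus q b0 <= Pr * Se /\ Pr * Se <= qplus q b1 ->
  inD q Pr Se.
Proof.
move=> [q_ge0 q_sum] [/andP[/andP[Pr_ge0 Pr_le1] /andP[Se_ge0 Se_le1]] [lb ub]].
pose t iota := if iota == b1 then Pr * Se else Pr - Pr * Se.
pose r := fill_rows q t.
have r_bounds : forall j, 0 <= r j <= q j.
  apply: fill_rows_bounds => // iota; rewrite /t.
  have PrSe_ge0 : 0 <= Pr * Se by rewrite mulr_ge0.
  have PrSe_le : Pr * Se <= Pr by rewrite ler_piMr.
  by case: (ord2P iota) => -> /=; apply/andP; split; lra.
have r_ge0 j : 0 <= r j by case/andP: (r_bounds j).
have qr_ge0 j : 0 <= q j - r j by rewrite subr_ge0; case/andP: (r_bounds j).
have r_mass : \sum_j r j = Pr by rewrite sum_qplus !qplus_fill_rows /t /=; ring.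
have qr_mass : \sum_j (q j - r j) = 1 - Pr by rewrite sumrB q_sum r_mass.
(* Has row-1 mass [Se]; it serves as [chi_{.|1}] when [Pr = 0]. *)
pose d1 (j : 'I_2 * 'I_2) := if j.2 == b1 then 0 else if j.1 == b1 then Se else 1 - Se.
have d1_prob : prob d1.
  split; last by rewrite sum_qplus /qplus /d1 /=; ring.
  by move=> [iota k]; rewrite /d1; case: ifP => _; [|case: ifP => _]; lra.
exists (fun i => if i == b1 then Pr else 1 - Pr).
exists (fun i => if i == b1 then normalize d1 r else normalize q (fun j => q j - r j)).
split; first by split; [move=> i; case: ifP => _; lra | rewrite big_ord2 /=; ring].
split; first by move=> i; case: ifP => _; apply: normalize_prob.
split.
  move=> j; rewrite /mu big_ord2 /= -qr_mass -r_mass !mass_normalize //.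
  by rewrite subrK.
split=> //=; rewrite /chi1 /=.
have [Pr0|Pr_neq0] := eqVneq Pr 0.
  by rewrite /normalize r_mass Pr0 eqxx /d1 /=; ring.
apply: (mulfI Pr_neq0); rewrite mulrDr -r_mass !mass_normalize // r_mass.
by have := qplus_fill_rows q t b1; rewrite /t eqxx => <-.
Qed.

Theorem lemma6 (R : realFieldType) (q : 'I_2 * 'I_2 -> R) :
  prob q ->
  (exists Pr Se : R, inD q Pr Se) /\
  (forall Pr Se : R,
     inD q Pr Se <->
     ((0 <= Pr <= 1) && (0 <= Se <= 1) /\
      Pr - qplus q b0 <= Pr * Se /\ Pr * Se <= qplus q b1)).
Proof.
move=> q_prob; split; last first.
  by move=> Pr Se; split; [exact: inD_bounds | exact: inD_of_bounds].
exists 0, 0; apply: inD_of_bounds => //.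
have [q_ge0 _] := q_prob.
by rewrite mul0r sub0r oppr_le0 !qplus_ge0 ?lexx ?ler01.
Qed.
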